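(* Let $m\in\mathbb{N}$. Then there is a bijection between the $m+m$ non-inclusive sum-and-distance systems and the $2m\times 2m$ principal reversible squares, and there is a bijection between the $m+m$ inclusive sum-and-distance systems and the $(2m+1)\times(2m+1)$ principal reversible squares.
   Context: Let $m\in\mathbb{N}$ and positive integers $a_1<\dots<a_m$, $b_1<\dots<b_m$. The pair $\{\{a_1,\dots,a_m\},\{b_1,\dots,b_m\}\}$ is an $m+m$ non-inclusive sum-and-distance system if $\{a_j+b_k,\ |a_j-b_k| : j,k\in\{1,\dots,m\}\}=\{1,3,5,\dots,4m^2-1\}$, and an $m+m$ inclusive sum-and-distance system if $\{a_j,\ b_k,\ a_j+b_k,\ |a_j-b_k| : j,k\in\{1,\dots,m\}\}=\{1,2,\dots,2m(m+1)\}$. For $n\in\mathbb{N}$, a reversible square matrix is a real matrix $M=(M_{i,j})$ with indices $i,j\in\mathbb{Z}_n=\mathbb{Z}/n\mathbb{Z}$ (top-left entry index $(1,1)$, indices computed modulo $n$) such that (R) $M_{i,j}+M_{i,n+1-j}=M_{i,k}+M_{i,n+1-k}$ and $M_{i,j}+M_{n+1-i,j}=M_{k,j}+M_{n+1-k,j}$ for all $i,j,k$, and (V) $M_{i,j}+M_{k,l}=M_{i,l}+M_{k,j}$ for all $i,j,k,l$. An $n\times n$ principal reversible square is a reversible square matrix whose set of entries is exactly $\{1,\dots,n^2\}$, whose entries increase along each row and each column, and with $M_{1,1}=1$, $M_{1,2}=2$. *)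

From HB Require Import structures.
From mathcomp Require Import all_boot all_order all_algebra.
From mathcomp Require Import finmap.
Set Implicit Arguments. Unset Strict Implicit. Unset Printing Implicit Defensive.
Import Order.TTheory GRing.Theory Num.Theory.
Local Open Scope fset_scope.

Definition ndist (a b : nat) : nat := (a - b) + (b - a).

(* A "pair" {A, B} of m-element sets of positive integers, encoded as the
   finite set S = {A, B} of finite sets.  (For m >= 1 the sum-and-distance
   condition forces A <> B, so S really has two elements.) *)
Definition sad_pair (m : nat) (S : {fset {fset nat}}) (A B : {fset nat}) : Prop :=
  [/\ S = [fset A; B], #|` A| = m, #|` B| = m, 0 \notin A & 0 \notin B].

Definition noninclusive_SAD (m : nat) (S : {fset {fset nat}}) : Prop :=
  exists A B : {fset nat}, sad_pair m S A B /\
    forall x : nat,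
      (exists a b, [/\ a \in A, b \in B & (x = (a + b)%N \/ x = ndist a b)]) <->
      (odd x /\ x < 4 * m ^ 2)%N.

Definition inclusive_SAD (m : nat) (S : {fset {fset nat}}) : Prop :=
  exists A B : {fset nat}, sad_pair m S A B /\
    forall x : nat,
      ((x \in A) \/ (x \in B) \/
       (exists a b, [/\ a \in A, b \in B & (x = (a + b)%N \/ x = ndist a b)])) <->
      (1 <= x /\ x <= 2 * m * (m + 1))%N.

Local Open Scope ring_scope.

(* Indices 1..n of the paper are the ordinals 0..n-1; the index n+1-j
   corresponds to rev_ord. *)
Definition reversible (n : nat) (M : 'M[int]_n) : Prop :=
  (forall i j k : 'I_n,
      M i j + M i (rev_ord j) = M i k + M i (rev_ord k)) /\
  (forall i j k : 'I_n,
      M i j + M (rev_ord i) j = M k j + M (rev_ord k) j) /\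
  (forall i j k l : 'I_n, M i j + M k l = M i l + M k j).

Definition principal_reversible_square (n : nat) (M : 'M[int]_n) : Prop :=
  [/\ reversible M,
      (forall x : int, (exists i j, M i j = x) <-> (1 <= x /\ x <= ((n ^ 2)%N)%:Z)),
      (forall i j k : 'I_n, (j < k)%N -> M i j < M i k),
      (forall i j k : 'I_n, (i < k)%N -> M i j < M k j)
    & exists i0 j1 : 'I_n, [/\ val i0 = 0%N, val j1 = 1%N,
                             M i0 i0 = 1 & M i0 j1 = 2]].

(* A principal reversible square has entries M i j = r_i + c_j + 1 with strictly
   increasing offsets r and c.  Reversibility makes R = {r_i} and C = {c_j}
   symmetric about max R / 2 and max C / 2, and the entry condition says that
   every z < n ^ 2 is r_i + c_j for exactly one pair (i, j); normalising by
   1 \in C, squares correspond to such pairs (R, C).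

   Folding a symmetric set about its centre produces the system.  For n = 2m
   let A = {|2y - max R|} and B = {|2y' - max C|}: as y, y' range over R, C,
   the number 2(y + y') + 1 - n ^ 2 ranges over the values +-a +-b, so
   R + C = [0, n ^ 2) exactly when {a + b, |a - b|} is the set of odd numbers
   below 4m ^ 2.  For n = 2m + 1 let A = {|y - max R / 2|} minus 0: now
   y + y' - (n ^ 2 - 1) / 2 ranges over 0, +-a, +-b and +-a +-b, and
   (n ^ 2 - 1) / 2 = 2m(m + 1).  Unfolding inverts folding, and the uniqueness
   of the representations y + y' rules out matching {A, B} with (C, R). *)

From HB Require Import structures.
From mathcomp Require Import all_boot all_order all_algebra.
From mathcomp Require Import finmap zify.
From Stdlib Require Import IndefiniteDescription ProofIrrelevance.
Set Implicit Arguments. Unset Strict Implicit. Unset Printing Implicit Defensive.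
Local Open Scope fset_scope.
Local Open Scope nat_scope.

(** * Sorted enumeration of finite sets of naturals *)

Definition fnth (X : {fset nat}) (i : nat) : nat := nth 0 (sort leq X) i.

Definition fmax (X : {fset nat}) : nat := fnth X #|` X|.-1.

Definition symmetric_fset (X : {fset nat}) : Prop :=
  forall x, x \in X -> fmax X - x \in X.

Section SortedEnumeration.
Variable X : {fset nat}.

Lemma size_sort_fset : size (sort leq X) = #|` X|.
Proof. by rewrite size_sort. Qed.

Lemma sorted_sort_fset : sorted ltn (sort leq X).
Proof.
by rewrite ltn_sorted_uniq_leq sort_uniq fset_uniq (sort_sorted leq_total).
Qed.

Lemma fnth_mem i : i < #|` X| -> fnth X i \in X.
Proof. by move=> ltiX; rewrite -(mem_sort leq) mem_nth ?size_sort_fset. Qed.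

Lemma fnthP x : x \in X -> exists2 i, i < #|` X| & fnth X i = x.
Proof. by rewrite -(mem_sort leq) => /(nthP 0) [i]; rewrite size_sort_fset; exists i. Qed.

Lemma fnth_ltn i j : i < j -> j < #|` X| -> fnth X i < fnth X j.
Proof.
move=> ltij ltjX; apply: (sorted_ltn_nth ltn_trans 0 sorted_sort_fset) => //;
  rewrite inE size_sort_fset //; exact: ltn_trans ltjX.
Qed.

Lemma fnth_leq i j : i <= j -> j < #|` X| -> fnth X i <= fnth X j.
Proof.
rewrite leq_eqVlt => /predU1P [-> //| ltij] ltjX.
exact/ltnW/fnth_ltn.
Qed.

Lemma fnth_inj i j : i < #|` X| -> j < #|` X| -> fnth X i = fnth X j -> i = j.
Proof.
move=> ltiX ltjX eqij; case: (ltngtP i j) => // [ltij|ltji].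
  by have := fnth_ltn ltij ltjX; rewrite eqij ltnn.
by have := fnth_ltn ltji ltiX; rewrite eqij ltnn.
Qed.

Lemma leq_fmax x : x \in X -> x <= fmax X.
Proof. by case/fnthP=> i ltiX <-; apply: fnth_leq; lia. Qed.

Lemma fmax_mem x : x \in X -> fmax X \in X.
Proof.
move=> xX; apply: fnth_mem; suff: 0 < #|` X| by lia.
by rewrite cardfs_gt0; apply/fset0Pn; exists x.
Qed.

Lemma fmax_eq x : x \in X -> (forall y, y \in X -> y <= x) -> fmax X = x.
Proof. by move=> xX le_x; apply/eqP; rewrite eqn_leq le_x ?(fmax_mem xX) ?leq_fmax. Qed.

Lemma fnth0 : 0 \in X -> fnth X 0 = 0.
Proof.
case/fnthP=> i ltiX fnth_i.
by have := fnth_leq (leq0n i) ltiX; rewrite fnth_i; lia.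
Qed.

End SortedEnumeration.

Lemma sort_fset_incr n (f : 'I_n -> nat) :
  (forall i j : 'I_n, i < j -> f i < f j) ->
  sort leq [fset f i | i : 'I_n] = map f (enum 'I_n).
Proof.
move=> f_incr; apply: (irr_sorted_eq ltn_trans ltnn (sorted_sort_fset _)).
  have : sorted ltn (map val (enum 'I_n)) by rewrite val_enum_ord iota_ltn_sorted.
  by rewrite sorted_map; apply: homo_sorted.
move=> x; rewrite mem_sort; apply/imfsetP/mapP => [[i _ ->]|[i _ ->]];
  by exists i; rewrite ?mem_enum.
Qed.

Section IncreasingImage.
Variables (n : nat) (f : 'I_n -> nat).
Hypothesis f_incr : forall i j : 'I_n, i < j -> f i < f j.

Lemma card_fset_incr : #|` [fset f i | i : 'I_n]| = n.
Proof. by rewrite -size_sort_fset sort_fset_incr // size_map size_enum_ord. Qed.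

Lemma fnth_fset_incr (i : 'I_n) : fnth [fset f i | i : 'I_n] i = f i.
Proof. by rewrite /fnth sort_fset_incr // (nth_map i) ?size_enum_ord ?nth_ord_enum. Qed.

End IncreasingImage.

Lemma fset_fnth n (X : {fset nat}) : #|` X| = n -> [fset fnth X (nat_of_ord i) | i : 'I_n] = X.
Proof.
move=> cardX; apply/fsetP => x; apply/imfsetP/idP => [[i _ ->]|/fnthP [k]].
  by apply: fnth_mem; rewrite cardX.
by rewrite cardX => ltkn <-; exists (Ordinal ltkn).
Qed.

Section SymmetricFset.
Variable X : {fset nat}.
Hypothesis X_sym : symmetric_fset X.

Lemma fnth_rev i : i < #|` X| -> fnth X i + fnth X (#|` X| - i.+1) = fmax X.
Proof.
move=> ltiX; set s := sort leq X.
have reflect_s : map (fun y => fmax X - y) (rev s) = s.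
  apply: (irr_sorted_eq ltn_trans ltnn _ (sorted_sort_fset X)).
    apply: (homo_sorted_in (P := mem X) (e := fun x y => y < x)).
    - by move=> x y xX yX; have := leq_fmax xX; lia.
    - by apply/allP => y; rewrite mem_rev mem_sort.
    - by rewrite rev_sorted sorted_sort_fset.
  move=> x; rewrite mem_sort; apply/mapP/idP => [[y]|xX].
    by rewrite mem_rev mem_sort => /X_sym + ->.
  exists (fmax X - x); first by rewrite mem_rev mem_sort X_sym.
  by have := leq_fmax xX; lia.
have := congr1 (nth 0 ^~ i) reflect_s.
rewrite /= (nth_map 0) ?size_rev ?size_sort_fset // nth_rev ?size_sort_fset //.
have le_max : fnth X (#|` X| - i.+1) <= fmax X by apply/leq_fmax/fnth_mem; lia.
by rewrite /fnth -/s in le_max * => <-; rewrite subnK.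
Qed.

Lemma fnth_rev_ord n (i : 'I_n) : #|` X| = n -> fnth X i + fnth X (rev_ord i) = fmax X.
Proof. by move=> cardX; have := @fnth_rev i; rewrite cardX => /(_ (ltn_ord i)). Qed.

Lemma symmetric_center : (exists2 y, y \in X & 2 * y = fmax X) <-> odd #|` X|.
Proof.
split=> [[y /fnthP [i ltiX <-] center_i]|odd_X].
  have lt_rev : #|` X| - i.+1 < #|` X| by lia.
  have : fnth X i = fnth X (#|` X| - i.+1) by have := fnth_rev ltiX; lia.
  by move/(fnth_inj ltiX lt_rev); lia.
have ltiX : #|` X|./2 < #|` X| by lia.
exists (fnth X #|` X|./2); first exact: fnth_mem.
have := fnth_rev ltiX; have -> : #|` X| - (#|` X|./2).+1 = #|` X|./2 by lia.
lia.
Qed.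

Lemma symmetric_odd_center : odd #|` X| -> 2 * (fmax X)./2 = fmax X /\ (fmax X)./2 \in X.
Proof.
case/symmetric_center=> y yR center_y.
by have -> : (fmax X)./2 = y by lia.
Qed.

Lemma symmetric_mem0 x : x \in X -> 0 \in X.
Proof. by move=> /fmax_mem /X_sym; rewrite subnn. Qed.

End SymmetricFset.

(** * Splittings of [0, n ^ 2) into symmetric sets *)

Lemma uniq_map_inj_in (T1 T2 : eqType) (f : T1 -> T2) (s : seq T1) :
  uniq (map f s) -> {in s &, injective f}.
Proof.
elim: s => //= a s IHs /andP [fa_notin s_uniq] x y.
rewrite !inE => /predU1P [-> | xs] /predU1P [-> | ys] // eq_f.
- by case/negP: fa_notin; rewrite eq_f map_f.
- by case/negP: fa_notin; rewrite -eq_f map_f.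
- exact: IHs.
Qed.

Definition in_sumset (X Y : {fset nat}) (z : nat) : Prop :=
  exists x y, [/\ x \in X, y \in Y & z = x + y].

(* The row and column offsets of a principal reversible square; 1 \in C
   records which of the two sets indexes the columns. *)
Record square_split (n : nat) (R C : {fset nat}) : Prop := SquareSplit {
  card_split_rows : #|` R| = n;
  card_split_cols : #|` C| = n;
  sumset_split : forall z, z < n ^ 2 <-> in_sumset R C z;
  symmetric_split_rows : symmetric_fset R;
  symmetric_split_cols : symmetric_fset C;
  split_one_col : 1 \in C }.

Section SquareSplit.
Variables (n : nat) (R C : {fset nat}).
Hypotheses (n_gt0 : 0 < n) (RC_split : square_split n R C).

Lemma split_mem0 : 0 \in R /\ 0 \in C.
Proof.
have [x [y [xR yC sum0]]] := (sumset_split RC_split 0).1 (ltac:(by rewrite expn_gt0 n_gt0)).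
have [x0 y0] : x = 0 /\ y = 0 by lia.
by subst x y.
Qed.

Lemma split_sum_inj x1 x2 y1 y2 : x1 \in R -> x2 \in R -> y1 \in C -> y2 \in C ->
  x1 + y1 = x2 + y2 -> x1 = x2.
Proof.
(* The n * n sums cover the n ^ 2 values below n ^ 2, so they are distinct. *)
move=> x1R x2R y1C y2C eq_sum.
pose s := [seq (x, y) | x <- enum_fset R, y <- enum_fset C].
have sums_uniq : uniq (map (fun p => p.1 + p.2) s).
  apply: (leq_size_uniq (iota_uniq 0 (n ^ 2))).
    move=> z; rewrite mem_iota add0n => /(sumset_split RC_split) [x [y [xR yC ->]]].
    by apply/mapP; exists (x, y); rewrite ?allpairs_f.
  rewrite size_map size_allpairs size_iota.
  by rewrite (card_split_rows RC_split) (card_split_cols RC_split).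
have := uniq_map_inj_in sums_uniq (allpairs_f pair x1R y1C) (allpairs_f pair x2R y2C).
by case/(_ eq_sum).
Qed.

Lemma split_fmax : fmax R + fmax C = n ^ 2 - 1.
Proof.
have [R0 C0] := split_mem0.
have n2_gt0 : 0 < n ^ 2 by rewrite expn_gt0 n_gt0.
have /(sumset_split RC_split) max_lt : in_sumset R C (fmax R + fmax C).
  by exists (fmax R), (fmax C); split; rewrite ?(fmax_mem R0) ?(fmax_mem C0).
have [x [y [xR yC top]]] := (sumset_split RC_split (n ^ 2 - 1)).1 (ltac:(lia)).
by have := leq_fmax xR; have := leq_fmax yC; lia.
Qed.

End SquareSplit.

Lemma in_sumsetC X Y z : in_sumset X Y z <-> in_sumset Y X z.
Proof.
by split=> [[x [y [xX yY ->]]] | [x [y [xY yX ->]]]];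
  exists y, x; split=> //; exact: addnC.
Qed.

Lemma square_split_or_swap n R C : 1 < n -> #|` R| = n -> #|` C| = n ->
  (forall z, z < n ^ 2 <-> in_sumset R C z) -> symmetric_fset R -> symmetric_fset C ->
  square_split n R C \/ square_split n C R.
Proof.
move=> n_gt1 cardR cardC sumsetE symR symC.
have [x [y [xR yC sum1]]] := (sumsetE 1).1 (ltac:(by rewrite (ltn_exp2l 0))).
have [[_ y1] | [x1 _]] : x = 0 /\ y = 1 \/ x = 1 /\ y = 0 by lia.
- by left; split=> //; rewrite -y1.
- right; split=> // [z|]; last by rewrite -x1.
  by rewrite in_sumsetC.
Qed.

(** * Principal reversible squares *)

Section PrincipalSquare.
Variable n : nat.
Hypothesis n_gt1 : 1 < n.

Definition ord_zero : 'I_n := Ordinal (ltnW n_gt1).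
Definition ord_one : 'I_n := Ordinal n_gt1.

Definition row_offset (M : 'M[int]_n) (i : 'I_n) : nat := `|M i ord_zero - 1|%N.
Definition col_offset (M : 'M[int]_n) (j : 'I_n) : nat := `|M ord_zero j - 1|%N.
Definition row_set (M : 'M[int]_n) : {fset nat} := [fset row_offset M i | i : 'I_n].
Definition col_set (M : 'M[int]_n) : {fset nat} := [fset col_offset M j | j : 'I_n].

Definition offset_mx (R C : {fset nat}) : 'M[int]_n :=
  \matrix_(i, j) Posz (fnth R i + fnth C j + 1).

Lemma symmetric_offsets (f : 'I_n -> nat) :
  (forall i j : 'I_n, i < j -> f i < f j) -> f ord_zero = 0 ->
  (forall i, f i + f (rev_ord i) = f (rev_ord ord_zero)) ->
  symmetric_fset [fset f i | i : 'I_n].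
Proof.
move=> f_incr f0 f_rev x /imfsetP [i _ ->].
have -> : fmax [fset f i | i : 'I_n] = f (rev_ord ord_zero).
  rewrite /fmax card_fset_incr // -(fnth_fset_incr f_incr); congr fnth.
  by rewrite /= subn1.
by rewrite -(f_rev i) addKn in_imfset.
Qed.

Section Principal.
Variable M : 'M[int]_n.
Hypothesis M_principal : principal_reversible_square M.

Lemma principal_entry_bounds i j : (1 <= M i j)%R /\ (M i j <= Posz (n ^ 2))%R.
Proof. by case: M_principal => _ /(_ (M i j)) [+ _] _ _ _; apply; exists i, j. Qed.

Lemma principal_corner : M ord_zero ord_zero = 1%R /\ M ord_zero ord_one = 2%R.
Proof.
case: M_principal => _ _ _ _ [i0 [j1 [i0_0 j1_1]]].
have -> : i0 = ord_zero by apply: val_inj.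
by have -> : j1 = ord_one by apply: val_inj.
Qed.

Lemma principal_mxE i j : M i j = Posz (row_offset M i + col_offset M j + 1).
Proof.
case: M_principal => [[_ [_ additive]]] _ _ _ _.
have := additive i j ord_zero ord_zero; rewrite /row_offset /col_offset.
have := principal_entry_bounds i ord_zero; have := principal_entry_bounds ord_zero j.
by case: principal_corner => -> _; lia.
Qed.

Lemma row_offset_incr (i j : 'I_n) : i < j -> row_offset M i < row_offset M j.
Proof.
case: M_principal => _ _ _ col_incr _ ltij; have := col_incr i ord_zero j ltij.
by rewrite !principal_mxE; lia.
Qed.

Lemma col_offset_incr (i j : 'I_n) : i < j -> col_offset M i < col_offset M j.
Proof.
case: M_principal => _ _ row_incr _ _ ltij; have := row_incr ord_zero i j ltij.
by rewrite !principal_mxE; lia.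
Qed.

Lemma principal_square_split : square_split n (row_set M) (col_set M).
Proof.
have [M00 M01] := principal_corner.
have row0 : row_offset M ord_zero = 0 by rewrite /row_offset M00.
have col0 : col_offset M ord_zero = 0 by rewrite /col_offset M00.
have col1 : col_offset M ord_one = 1 by rewrite /col_offset M01.
case: M_principal => [[col_rev [row_rev _]]] values _ _ _.
split.
- exact/card_fset_incr/row_offset_incr.
- exact/card_fset_incr/col_offset_incr.
- move=> z; split=> [z_lt | [_ [_ [/imfsetP [i _ ->] /imfsetP [j _ ->] ->]]]].
    have [i [j Mij]] := (values (Posz z.+1)).2 (ltac:(lia)).
    exists (row_offset M i), (col_offset M j).
    by split; rewrite ?in_imfset //; move: Mij; rewrite principal_mxE; lia.
  by have := principal_entry_bounds i j; rewrite principal_mxE; lia.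
- apply: symmetric_offsets (row0) _ => [|i]; first exact: row_offset_incr.
  by have := row_rev i ord_zero ord_zero; rewrite !principal_mxE row0; lia.
- apply: symmetric_offsets (col0) _ => [|j]; first exact: col_offset_incr.
  by have := col_rev ord_zero j ord_zero; rewrite !principal_mxE col0; lia.
- by rewrite -col1 in_imfset.
Qed.

Lemma principal_offset_mx : offset_mx (row_set M) (col_set M) = M.
Proof.
apply/matrixP => i j; rewrite mxE principal_mxE.
by rewrite !fnth_fset_incr //; [apply: col_offset_incr | apply: row_offset_incr].
Qed.

End Principal.

Section Construction.
Variables R C : {fset nat}.
Hypothesis RC_split : square_split n R C.

Lemma split_fnth01 : [/\ fnth R 0 = 0, fnth C 0 = 0 & fnth C 1 = 1].
Proof.
have [R0 C0] := split_mem0 (ltnW n_gt1) RC_split.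
have fnthC0 := fnth0 C0; split; rewrite ?fnth0 //.
have cardC := card_split_cols RC_split.
have [i ltiC fnth_i] := fnthP (split_one_col RC_split).
have lt01 : fnth C 0 < fnth C 1 by apply: fnth_ltn; rewrite ?cardC.
have i_gt0 : 0 < i by case: i fnth_i {ltiC} => //; rewrite fnthC0.
by have := fnth_leq i_gt0 ltiC; lia.
Qed.

Lemma offset_mx_principal : principal_reversible_square (offset_mx R C).
Proof.
have [R0 C0 C1] := split_fnth01.
have cardR := card_split_rows RC_split; have cardC := card_split_cols RC_split.
have symR := fnth_rev_ord (symmetric_split_rows RC_split).
have symC := fnth_rev_ord (symmetric_split_cols RC_split).
split.
- split; [|split].
  + by move=> i j k; rewrite !mxE; have := symC _ j cardC; have := symC _ k cardC; lia.
  + by move=> i j k; rewrite !mxE; have := symR _ i cardR; have := symR _ k cardR; lia.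
  + by move=> i j k l; rewrite !mxE; lia.
- move=> x; split=> [[i [j <-]] | x_range].
    rewrite mxE; suff : fnth R i + fnth C j < n ^ 2 by lia.
    by apply/(sumset_split RC_split); exists (fnth R i), (fnth C j);
      split; rewrite ?fnth_mem ?cardR ?cardC.
  have /(sumset_split RC_split) [_ [_ [/fnthP [i ltiR <-] /fnthP [j ltjC <-] sum_x]]] :
    (`|x| - 1 < n ^ 2)%N by lia.
  rewrite cardR in ltiR; rewrite cardC in ltjC.
  by exists (Ordinal ltiR), (Ordinal ltjC); rewrite mxE /=; lia.
- by move=> i j k ltjk; rewrite !mxE ltz_nat ltn_add2r ltn_add2l fnth_ltn ?cardC.
- by move=> i j k ltik; rewrite !mxE ltz_nat ltn_add2r ltn_add2r fnth_ltn ?cardR.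
- by exists ord_zero, ord_one; rewrite !mxE /= R0 C0 C1.
Qed.

Lemma row_col_set_offset_mx :
  row_set (offset_mx R C) = R /\ col_set (offset_mx R C) = C.
Proof.
have [R0 C0 _] := split_fnth01.
split.
- rewrite -{2}(fset_fnth (card_split_rows RC_split)); apply: eq_imfset => // i.
  by rewrite /row_offset mxE /= C0; lia.
- rewrite -{2}(fset_fnth (card_split_cols RC_split)); apply: eq_imfset => // j.
  by rewrite /col_offset mxE /= R0; lia.
Qed.

End Construction.
End PrincipalSquare.

(** * Folding symmetric sets of even size *)

Definition sad_value (A B : {fset nat}) (x : nat) : Prop :=
  exists a b, [/\ a \in A, b \in B & (x = a + b \/ x = ndist a b)].

Lemma sad_value_add A B a b : a \in A -> b \in B -> sad_value A B (a + b).
Proof. by move=> aA bB; exists a, b; split=> //; left. Qed.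

Lemma sad_value_dist A B a b : a \in A -> b \in B -> sad_value A B (ndist a b).
Proof. by move=> aA bB; exists a, b; split=> //; right. Qed.

(* Truncated subtraction sends the upper half of R to 0, which is removed;
   a symmetric set of even size has no element at its centre. *)
Definition fold_even (R : {fset nat}) : {fset nat} :=
  [fset fmax R - 2 * y | y in R] `\ 0.

Definition unfold_even (r : nat) (A : {fset nat}) : {fset nat} :=
  [fset (r - a)./2 | a in A] `|` [fset (r + a)./2 | a in A].

Definition admissible_even (r : nat) (A : {fset nat}) : Prop :=
  forall a, a \in A -> [/\ 0 < a, a <= r & odd a = odd r].

Lemma fold_evenP R a :
  a \in fold_even R <-> 0 < a /\ exists2 y, y \in R & a = fmax R - 2 * y.
Proof.
rewrite in_fsetD1; split=> [/andP [a_neq0 /imfsetP [y yR a_eq]] | [a_gt0 [y yR a_eq]]].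
  by split; [lia | exists y].
by apply/andP; split; [lia | apply/imfsetP; exists y].
Qed.

Lemma unfold_evenP r A x :
  x \in unfold_even r A <-> exists2 a, a \in A & (x = (r - a)./2 \/ x = (r + a)./2).
Proof.
rewrite in_fsetU; split=> [/orP [] /imfsetP [a aA ->] | [a aA [->|->]]].
- by exists a; [|left].
- by exists a; [|right].
- by apply/orP; left; apply/imfsetP; exists a.
- by apply/orP; right; apply/imfsetP; exists a.
Qed.

Lemma admissible_fold_even R : admissible_even (fmax R) (fold_even R).
Proof. by move=> a /fold_evenP [a_gt0 [y _ a_eq]]; split; lia. Qed.

Section UnfoldEven.
Variables (r : nat) (A : {fset nat}).
Hypotheses (A_adm : admissible_even r A) (rA : r \in A).

Lemma fmax_unfold_even : fmax (unfold_even r A) = r.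
Proof.
apply: fmax_eq => [|x /unfold_evenP [a /A_adm [? ? ?] x_eq]]; last by lia.
by apply/unfold_evenP; exists r => //; right; lia.
Qed.

Lemma fold_unfold_even : fold_even (unfold_even r A) = A.
Proof.
apply/fsetP => a; apply/idP/idP => [/fold_evenP [a_gt0 [y]] | aA].
  rewrite fmax_unfold_even => /unfold_evenP [b bA y_eq] a_eq.
  by have [? ? ?] := A_adm bA; have -> : a = b by lia.
have [? ? ?] := A_adm aA; apply/fold_evenP; split=> //; exists ((r - a)./2).
  by apply/unfold_evenP; exists a => //; left.
by rewrite fmax_unfold_even; lia.
Qed.

Lemma card_unfold_even : #|` unfold_even r A| = 2 * #|` A|.
Proof.
rewrite cardfsU.
have -> : [fset (r - a)./2 | a in A] `&` [fset (r + a)./2 | a in A] = fset0.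
  apply/fsetP => x; rewrite in_fsetI in_fset0.
  apply/negP => /andP [/imfsetP [a aA ->] /imfsetP [b bA eq_ab]].
  by have := A_adm aA; have := A_adm bA; case=> ? ? ? [? ? ?]; lia.
rewrite !card_in_imfset ?cardfs0 ?subn0 => [|a b aA bA /=|a b aA bA /=]; last 2 first.
- by have := A_adm aA; have := A_adm bA; case=> ? ? ? [? ? ?]; lia.
- by have := A_adm aA; have := A_adm bA; case=> ? ? ? [? ? ?]; lia.
rewrite /=; lia.
Qed.

Lemma symmetric_unfold_even : symmetric_fset (unfold_even r A).
Proof.
rewrite /symmetric_fset fmax_unfold_even => x /unfold_evenP [a aA x_eq].
by have [? ? ?] := A_adm aA; apply/unfold_evenP; exists a => //; case: x_eq => ->; lia.
Qed.

End UnfoldEven.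

Lemma unfold_even_mem r A a (plus : bool) : a \in A ->
  (if plus then (r + a)./2 else (r - a)./2) \in unfold_even r A.
Proof. by move=> aA; apply/unfold_evenP; exists a => //; case: plus; [right | left]. Qed.

Section FoldEven.
Variable R : {fset nat}.
Hypotheses (R_sym : symmetric_fset R) (R_even : ~~ odd #|` R|) (R_gt0 : 0 < #|` R|).

Lemma fold_even_center_free y : y \in R -> 2 * y <> fmax R.
Proof. by move=> yR center_y; case/negP: R_even; apply/(symmetric_center R_sym); exists y. Qed.

Lemma fmax_mem_fold_even : fmax R \in fold_even R.
Proof.
have [x xR] : exists x, x \in R by apply/fset0Pn; rewrite -cardfs_gt0.
have R0 := symmetric_mem0 R_sym xR.
have := fold_even_center_free R0; rewrite muln0 => fmax_neq0.
by apply/fold_evenP; split; [lia | exists 0; rewrite ?muln0 ?subn0].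
Qed.

Lemma fmax_fold_even : fmax (fold_even R) = fmax R.
Proof. by apply: fmax_eq fmax_mem_fold_even _ => a /admissible_fold_even []. Qed.

Lemma unfold_fold_even : unfold_even (fmax R) (fold_even R) = R.
Proof.
apply/fsetP => x; apply/idP/idP => [/unfold_evenP [a /fold_evenP [a_gt0 [y yR a_eq]] x_eq] | xR].
  have := leq_fmax yR; case: x_eq => -> le_y; first by have -> : (fmax R - a)./2 = y by lia.
  have -> : (fmax R + a)./2 = fmax R - y by lia.
  exact: R_sym.
have := leq_fmax xR; have := fold_even_center_free xR => x_noncenter le_x.
case: (ltnP (2 * x) (fmax R)) => x_pos.
  apply/unfold_evenP; exists (fmax R - 2 * x); last by left; lia.
  by apply/fold_evenP; split; [lia | exists x].
apply/unfold_evenP; exists (2 * x - fmax R); last by right; lia.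
apply/fold_evenP; split; first lia.
by exists (fmax R - x); [apply: R_sym | lia].
Qed.

Lemma card_fold_even : 2 * #|` fold_even R| = #|` R|.
Proof.
rewrite -(card_unfold_even (@admissible_fold_even R) fmax_mem_fold_even).
by rewrite unfold_fold_even.
Qed.

End FoldEven.

Section SumsetEven.
Variables (r c : nat) (A B : {fset nat}).
Hypotheses (A_adm : admissible_even r A) (B_adm : admissible_even c B).

Lemma sumset_unfold_even z :
  in_sumset (unfold_even r A) (unfold_even c B) z <->
  sad_value A B (ndist (2 * z + 1) (r + c + 1)).
Proof.
split=> [[x [y [/unfold_evenP [a aA x_eq] /unfold_evenP [b bB y_eq] ->]]] |
         [a [b [aA bB d_eq]]]].
  exists a, b; split=> //; have [? ? ?] := A_adm aA; have [? ? ?] := B_adm bB.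
  rewrite /ndist; case: x_eq => ->; case: y_eq => ->; [left | right | right | left]; lia.
have [? ? ?] := A_adm aA; have [? ? ?] := B_adm bB.
have [plus_a [plus_b z_eq]] : exists plus_a plus_b : bool,
    z = (if plus_a then (r + a)./2 else (r - a)./2) +
        (if plus_b then (c + b)./2 else (c - b)./2).
  rewrite /ndist in d_eq.
  case: (leqP (r + c + 1) (2 * z + 1)) => ?; case: (leqP b a) => ?.
  - by case: d_eq => ?; [exists true, true | exists true, false]; lia.
  - by case: d_eq => ?; [exists true, true | exists false, true]; lia.
  - by case: d_eq => ?; [exists false, false | exists false, true]; lia.
  - by case: d_eq => ?; [exists false, false | exists true, false]; lia.
by exists (if plus_a then (r + a)./2 else (r - a)./2),
  (if plus_b then (c + b)./2 else (c - b)./2); split; rewrite ?unfold_even_mem.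
Qed.

Lemma sumset_unfold_even_iff N : r + c + 1 = N -> ~~ odd N ->
  (forall z, z < N <-> in_sumset (unfold_even r A) (unfold_even c B) z) <->
  (forall x, sad_value A B x <-> odd x /\ x < N).
Proof.
move=> rcN N_even.
have sad_bound x : sad_value A B x -> odd x /\ x < N.
  case=> a [b [/A_adm [? ? ?] /B_adm [? ? ?]]]; rewrite /ndist; lia.
have sumset_bound z : in_sumset (unfold_even r A) (unfold_even c B) z -> z < N.
  case=> x [y [/unfold_evenP [a /A_adm [? ? ?] x_eq] /unfold_evenP [b /B_adm [? ? ?] y_eq] ->]].
  lia.
split=> [sumsetE x | sadE z].
  split=> [/sad_bound // | [x_odd x_lt]].
  have /sumsetE /sumset_unfold_even : (N - 1 + x)./2 < N by lia.
  by have -> : ndist (2 * (N - 1 + x)./2 + 1) (r + c + 1) = x by rewrite /ndist; lia.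
split=> [z_lt | /sumset_bound //].
by apply/sumset_unfold_even/sadE; rewrite /ndist; lia.
Qed.

End SumsetEven.

Lemma fold_even_sad_part m X : 0 < m -> symmetric_fset X -> #|` X| = 2 * m ->
  [/\ unfold_even (fmax X) (fold_even X) = X, #|` fold_even X| = m & 0 \notin fold_even X].
Proof.
move=> m_gt0 X_sym cardX.
have X_even : ~~ odd #|` X| by rewrite cardX; lia.
have X_gt0 : 0 < #|` X| by rewrite cardX; lia.
split; first exact: unfold_fold_even.
  by have := card_fold_even X_sym X_even X_gt0; rewrite cardX; lia.
by apply/negP => /fold_evenP [].
Qed.

Lemma split_noninclusive_SAD m R C : 0 < m -> square_split (2 * m) R C ->
  noninclusive_SAD m [fset fold_even R; fold_even C].
Proof.
move=> m_gt0 RC_split; have [cardR cardC sumsetE symR symC _] := RC_split.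
have [unfoldR cardAR AR0] := fold_even_sad_part m_gt0 symR cardR.
have [unfoldC cardAC AC0] := fold_even_sad_part m_gt0 symC cardC.
have fmax_sum := split_fmax (ltac:(lia) : 0 < 2 * m) RC_split.
exists (fold_even R), (fold_even C); split; first by [].
have sq2m : (2 * m) ^ 2 = 4 * m ^ 2 by lia.
apply: (sumset_unfold_even_iff (@admissible_fold_even R) (@admissible_fold_even C)
  (_ : _ = 4 * m ^ 2) _).1 => [|| z]; first by lia.
- by rewrite oddM.
- by rewrite unfoldR unfoldC -sq2m.
Qed.

Lemma noninclusive_SAD_split m S : 0 < m -> noninclusive_SAD m S ->
  exists R C, square_split (2 * m) R C /\ [fset fold_even R; fold_even C] = S.
Proof.
move=> m_gt0 [A [B [[-> cardA cardB A0 B0] sadE]]].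
have [a0 a0A] : exists a, a \in A by apply/fset0Pn; rewrite -cardfs_gt0 cardA.
have [b0 b0B] : exists b, b \in B by apply/fset0Pn; rewrite -cardfs_gt0 cardB.
have maxA := fmax_mem a0A; have maxB := fmax_mem b0B.
have A_pos a : a \in A -> 0 < a by move=> aA; rewrite lt0n; apply: contraNneq A0 => <-.
have B_pos b : b \in B -> 0 < b by move=> bB; rewrite lt0n; apply: contraNneq B0 => <-.
have odd_sum a b : a \in A -> b \in B -> odd (a + b).
  by move=> aA bB; have [] := (sadE _).1 (sad_value_add aA bB).
have A_adm : admissible_even (fmax A) A.
  move=> a aA; have := odd_sum _ _ aA maxB; have := odd_sum _ _ maxA maxB.
  by have := leq_fmax aA; have := A_pos _ aA; split; lia.
have B_adm : admissible_even (fmax B) B.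
  move=> b bB; have := odd_sum _ _ maxA bB; have := odd_sum _ _ maxA maxB.
  by have := leq_fmax bB; have := B_pos _ bB; split; lia.
have fmax_sum : fmax A + fmax B + 1 = 4 * m ^ 2.
  have m2_gt0 : 0 < m ^ 2 by rewrite expn_gt0 m_gt0.
  have [a [b [aA bB top]]] := (sadE (4 * m ^ 2 - 1)).2 (ltac:(lia)).
  have [_ max_lt] := (sadE _).1 (sad_value_add maxA maxB).
  by have := leq_fmax aA; have := leq_fmax bB; rewrite /ndist in top; lia.
have sq2m : (2 * m) ^ 2 = 4 * m ^ 2 by lia.
have sumsetE := (sumset_unfold_even_iff A_adm B_adm fmax_sum (ltac:(by rewrite oddM))).2 sadE.
rewrite -sq2m in sumsetE.
have cardRA : #|` unfold_even (fmax A) A| = 2 * m by rewrite card_unfold_even ?cardA.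
have cardRB : #|` unfold_even (fmax B) B| = 2 * m by rewrite card_unfold_even ?cardB.
have [RC_split | CR_split] := square_split_or_swap (ltac:(lia) : 1 < 2 * m) cardRA cardRB sumsetE
  (symmetric_unfold_even A_adm maxA) (symmetric_unfold_even B_adm maxB).
- exists (unfold_even (fmax A) A), (unfold_even (fmax B) B).
  by rewrite !fold_unfold_even.
- exists (unfold_even (fmax B) B), (unfold_even (fmax A) A).
  by rewrite !fold_unfold_even // fsetUC.
Qed.

(** * Folding symmetric sets of odd size *)

Definition inclusive_value (A B : {fset nat}) (x : nat) : Prop :=
  x \in A \/ x \in B \/ sad_value A B x.

Lemma sad_value_fset1U0 A B x :
  sad_value (0 |` A) (0 |` B) x <-> x = 0 \/ inclusive_value A B x.
Proof.
split=> [[a [b [+ + x_eq]]] | [-> | [xA | [xB | [a [b [aA bB x_eq]]]]]]].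
- rewrite !in_fset1U => /predU1P [a0 | aA] /predU1P [b0 | bB]; rewrite /ndist in x_eq.
  + by left; lia.
  + by right; right; left; have -> : x = b by lia.
  + by right; left; have -> : x = a by lia.
  + by right; right; right; exists a, b.
- by exists 0, 0; rewrite !fset1U1; split=> //; left.
- by exists x, 0; rewrite fset1U1 fset1Ur //; split=> //; left; rewrite addn0.
- by exists 0, x; rewrite fset1U1 fset1Ur //; split=> //; left.
- by exists a, b; rewrite !fset1Ur.
Qed.

(* As for fold_even, the upper half of R and its centre are sent to 0. *)
Definition fold_odd (R : {fset nat}) : {fset nat} :=
  [fset (fmax R)./2 - y | y in R] `\ 0.

Definition unfold_odd (h : nat) (A : {fset nat}) : {fset nat} :=
  h |` ([fset h - a | a in A] `|` [fset h + a | a in A]).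

Definition admissible_odd (h : nat) (A : {fset nat}) : Prop :=
  forall a, a \in A -> 0 < a <= h.

Lemma fold_oddP R a :
  a \in fold_odd R <-> 0 < a /\ exists2 y, y \in R & a = (fmax R)./2 - y.
Proof.
rewrite in_fsetD1; split=> [/andP [a_neq0 /imfsetP [y yR a_eq]] | [a_gt0 [y yR a_eq]]].
  by split; [lia | exists y].
by apply/andP; split; [lia | apply/imfsetP; exists y].
Qed.

Lemma unfold_oddP h A x :
  x \in unfold_odd h A <-> exists2 a, a \in 0 |` A & (x = h - a \/ x = h + a).
Proof.
rewrite in_fset1U in_fsetU; split=> [/predU1P [-> | /orP [] /imfsetP [a aA ->]] | [a]].
- by exists 0; [exact: fset1U1 | left; rewrite subn0].
- by exists a; [rewrite fset1Ur | left].
- by exists a; [rewrite fset1Ur | right].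
rewrite in_fset1U => /predU1P [-> | aA] [] ->; rewrite ?subn0 ?addn0 ?eqxx //.
- by apply/orP; right; apply/orP; left; apply/imfsetP; exists a.
- by apply/orP; right; apply/orP; right; apply/imfsetP; exists a.
Qed.

Lemma unfold_odd_mem h A a (plus : bool) : a \in 0 |` A ->
  (if plus then h + a else h - a) \in unfold_odd h A.
Proof. by move=> aA; apply/unfold_oddP; exists a => //; case: plus; [right | left]. Qed.

Lemma admissible_fold_odd R : admissible_odd (fmax R)./2 (fold_odd R).
Proof. by move=> a /fold_oddP [a_gt0 [y _ a_eq]]; lia. Qed.

Section UnfoldOdd.
Variables (h : nat) (A : {fset nat}).
Hypotheses (A_adm : admissible_odd h A) (hA : h \in A).

Lemma unfold_odd_bound x : x \in unfold_odd h A -> x <= 2 * h.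
Proof.
case/unfold_oddP => a; rewrite in_fset1U => /predU1P [-> | /A_adm a_le]; lia.
Qed.

Lemma fmax_unfold_odd : fmax (unfold_odd h A) = 2 * h.
Proof.
apply: fmax_eq unfold_odd_bound.
by apply/unfold_oddP; exists h; [rewrite fset1Ur | right; lia].
Qed.

Lemma fold_unfold_odd : fold_odd (unfold_odd h A) = A.
Proof.
apply/fsetP => a; apply/idP/idP => [/fold_oddP [a_gt0 [y]] | aA].
  rewrite fmax_unfold_odd => /unfold_oddP [b]; rewrite in_fset1U.
  case/predU1P => [-> | bA] y_eq a_eq; first by lia.
  by have := A_adm bA => b_range; have -> : a = b by lia.
have := A_adm aA => a_range; apply/fold_oddP; split; first by lia.
exists (h - a); first by apply/unfold_oddP; exists a; [rewrite fset1Ur | left].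
by rewrite fmax_unfold_odd; lia.
Qed.

Lemma card_unfold_odd : #|` unfold_odd h A| = (2 * #|` A|).+1.
Proof.
rewrite cardfsU1 cardfsU.
have -> : [fset h - a | a in A] `&` [fset h + a | a in A] = fset0.
  apply/fsetP => x; rewrite in_fsetI in_fset0.
  apply/negP => /andP [/imfsetP [a aA ->] /imfsetP [b bA eq_ab]].
  by have := A_adm aA; have := A_adm bA; lia.
have -> : h \notin [fset h - a | a in A] `|` [fset h + a | a in A].
  by rewrite in_fsetU; apply/negP => /orP [] /imfsetP [a aA a_eq]; have := A_adm aA; lia.
rewrite !card_in_imfset ?cardfs0 ?subn0 => [|a b aA bA /=|a b aA bA /=]; last 2 first.
- by have := A_adm aA; have := A_adm bA; lia.
- by have := A_adm aA; have := A_adm bA; lia.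
rewrite /=; lia.
Qed.

Lemma symmetric_unfold_odd : symmetric_fset (unfold_odd h A).
Proof.
rewrite /symmetric_fset fmax_unfold_odd => x /unfold_oddP [a a_mem x_eq].
have le_a : a <= h by move: a_mem; rewrite in_fset1U => /predU1P [-> | /A_adm]; lia.
by apply/unfold_oddP; exists a => //; case: x_eq => ->; lia.
Qed.

End UnfoldOdd.

Lemma admissible_odd_fset1U0 h A a : admissible_odd h A -> a \in 0 |` A -> a <= h.
Proof. by move=> A_adm; rewrite in_fset1U => /predU1P [-> | /A_adm /andP []]. Qed.

Section FoldOdd.
Variable R : {fset nat}.
Hypotheses (R_sym : symmetric_fset R) (R_odd : odd #|` R|) (R_gt1 : 1 < #|` R|).

Lemma fmax_mem_fold_odd : (fmax R)./2 \in fold_odd R.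
Proof.
have [center_eq center_mem] := symmetric_odd_center R_sym R_odd.
have fmax_gt0 : 0 < fmax R.
  by have := fnth_ltn (ltn0Sn 0) R_gt1; have := leq_fmax (fnth_mem R_gt1); lia.
apply/fold_oddP; split; first by lia.
by exists 0; rewrite ?subn0 // (symmetric_mem0 R_sym center_mem).
Qed.

Lemma fmax_fold_odd : fmax (fold_odd R) = (fmax R)./2.
Proof. by apply: fmax_eq fmax_mem_fold_odd _ => a /admissible_fold_odd /andP []. Qed.

Lemma unfold_fold_odd : unfold_odd (fmax R)./2 (fold_odd R) = R.
Proof.
have [center_eq center_mem] := symmetric_odd_center R_sym R_odd.
apply/fsetP => x; apply/idP/idP => [/unfold_oddP [a] | xR].
  rewrite in_fset1U => /predU1P [-> [] -> | /fold_oddP [a_gt0 [y yR a_eq]] x_eq];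
    rewrite ?subn0 ?addn0 //.
  have := leq_fmax yR => le_y.
  case: x_eq => ->; first by have -> : (fmax R)./2 - a = y by lia.
  have -> : (fmax R)./2 + a = fmax R - y by lia.
  exact: R_sym.
have := leq_fmax xR => le_x; apply/unfold_oddP.
case: (ltngtP x (fmax R)./2) => [x_lt | x_gt | ->].
- exists ((fmax R)./2 - x); last by left; lia.
  by apply/fset1Ur/fold_oddP; split; [lia | exists x].
- exists (x - (fmax R)./2); last by right; lia.
  apply/fset1Ur/fold_oddP; split; first by lia.
  by exists (fmax R - x); [apply: R_sym | lia].
- by exists 0; [exact: fset1U1 | left; rewrite subn0].
Qed.

Lemma card_fold_odd : (2 * #|` fold_odd R|).+1 = #|` R|.
Proof.
rewrite -(card_unfold_odd (@admissible_fold_odd R) fmax_mem_fold_odd).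
by rewrite unfold_fold_odd.
Qed.

End FoldOdd.

Section SumsetOdd.
Variables (h k : nat) (A B : {fset nat}).
Hypotheses (A_adm : admissible_odd h A) (B_adm : admissible_odd k B).

Lemma sumset_unfold_odd z :
  in_sumset (unfold_odd h A) (unfold_odd k B) z <->
  sad_value (0 |` A) (0 |` B) (ndist z (h + k)).
Proof.
split=> [[x [y [/unfold_oddP [a aA x_eq] /unfold_oddP [b bB y_eq] ->]]] |
         [a [b [aA bB d_eq]]]].
  exists a, b; split=> //.
  have := admissible_odd_fset1U0 A_adm aA; have := admissible_odd_fset1U0 B_adm bB.
  rewrite /ndist; case: x_eq => ->; case: y_eq => ->; [left | right | right | left]; lia.
have := admissible_odd_fset1U0 A_adm aA; have := admissible_odd_fset1U0 B_adm bB.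
move=> le_b le_a.
have [plus_a [plus_b z_eq]] : exists plus_a plus_b : bool,
    z = (if plus_a then h + a else h - a) + (if plus_b then k + b else k - b).
  rewrite /ndist in d_eq.
  case: (leqP (h + k) z) => ?; case: (leqP b a) => ?.
  - by case: d_eq => ?; [exists true, true | exists true, false]; lia.
  - by case: d_eq => ?; [exists true, true | exists false, true]; lia.
  - by case: d_eq => ?; [exists false, false | exists false, true]; lia.
  - by case: d_eq => ?; [exists false, false | exists true, false]; lia.
by exists (if plus_a then h + a else h - a), (if plus_b then k + b else k - b);
  split; rewrite ?unfold_odd_mem.
Qed.

Lemma sumset_unfold_odd_iff K : h + k = K -> (forall a, a \in A -> a \notin B) ->
  (forall z, z < 2 * K + 1 <-> in_sumset (unfold_odd h A) (unfold_odd k B) z) <->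
  (forall x, inclusive_value A B x <-> 1 <= x /\ x <= K).
Proof.
move=> hkK AB_disj.
have sad_bound x : sad_value (0 |` A) (0 |` B) x -> x <= K.
  case=> a [b [/(admissible_odd_fset1U0 A_adm) ? /(admissible_odd_fset1U0 B_adm) ?]].
  rewrite /ndist; lia.
have value_gt0 x : inclusive_value A B x -> 0 < x.
  case=> [/A_adm | [/B_adm | [a [b [aA bB x_eq]]]]]; try lia.
  have : a != b by apply: contraTneq bB => <-; apply: AB_disj.
  by have := A_adm aA; have := B_adm bB; rewrite /ndist in x_eq; lia.
split=> [sumsetE x | incE z].
  split=> [x_inc | [x_gt0 x_le]].
    have := value_gt0 _ x_inc; have := sad_bound x ((sad_value_fset1U0 _ _ _).2 (or_intror x_inc)).
    lia.
  have /sumsetE /sumset_unfold_odd /sad_value_fset1U0 : K + x < 2 * K + 1 by lia.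
  by rewrite (_ : ndist (K + x) (h + k) = x); [case=> // x0; lia | rewrite /ndist; lia].
split=> [z_lt | /sumset_unfold_odd /sad_bound]; last by rewrite /ndist; lia.
apply/sumset_unfold_odd/sad_value_fset1U0.
have [-> | d_neq0] := eqVneq (ndist z (h + k)) 0; first by left.
by right; apply/incE; rewrite /ndist in d_neq0 *; lia.
Qed.

End SumsetOdd.

Lemma fold_odd_sad_part m X : 0 < m -> symmetric_fset X -> #|` X| = 2 * m + 1 ->
  [/\ unfold_odd (fmax X)./2 (fold_odd X) = X, #|` fold_odd X| = m,
      0 \notin fold_odd X, 2 * (fmax X)./2 = fmax X & (fmax X)./2 \in X].
Proof.
move=> m_gt0 X_sym cardX.
have X_odd : odd #|` X| by rewrite cardX addn1 /= oddM.
have X_gt1 : 1 < #|` X| by rewrite cardX; lia.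
have [center_eq center_mem] := symmetric_odd_center X_sym X_odd.
split=> //; first exact: unfold_fold_odd.
- by have := card_fold_odd X_sym X_odd X_gt1; rewrite cardX; lia.
- by apply/negP => /fold_oddP [].
Qed.

Lemma split_inclusive_SAD m R C : 0 < m -> square_split (2 * m + 1) R C ->
  inclusive_SAD m [fset fold_odd R; fold_odd C].
Proof.
move=> m_gt0 RC_split; have [cardR cardC sumsetE symR symC _] := RC_split.
have [unfoldR cardAR AR0 centerR hR] := fold_odd_sad_part m_gt0 symR cardR.
have [unfoldC cardAC AC0 centerC kC] := fold_odd_sad_part m_gt0 symC cardC.
have sq : (2 * m + 1) ^ 2 = 2 * (2 * m * (m + 1)) + 1 by nia.
have hk : (fmax R)./2 + (fmax C)./2 = 2 * m * (m + 1).
  by have := split_fmax (ltac:(lia) : 0 < 2 * m + 1) RC_split; rewrite sq; lia.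
have disj a : a \in fold_odd R -> a \notin fold_odd C.
  move=> /fold_oddP [a_gt0 [y yR a_eq]]; apply/negP => /fold_oddP [_ [y' y'C a_eq']].
  have := split_sum_inj RC_split yR hR (symC _ y'C) kC.
  by have := leq_fmax y'C; lia.
exists (fold_odd R), (fold_odd C); split; first by [].
apply: (sumset_unfold_odd_iff (@admissible_fold_odd R) (@admissible_fold_odd C) hk disj).1.
by move=> z; rewrite unfoldR unfoldC -sq.
Qed.

Lemma inclusive_SAD_split m S : 0 < m -> inclusive_SAD m S ->
  exists R C, square_split (2 * m + 1) R C /\ [fset fold_odd R; fold_odd C] = S.
Proof.
move=> m_gt0 [A [B [[-> cardA cardB A0 B0] incE]]].
have [a0 a0A] : exists a, a \in A by apply/fset0Pn; rewrite -cardfs_gt0 cardA.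
have [b0 b0B] : exists b, b \in B by apply/fset0Pn; rewrite -cardfs_gt0 cardB.
have maxA := fmax_mem a0A; have maxB := fmax_mem b0B.
have A_adm : admissible_odd (fmax A) A.
  by move=> a aA; rewrite leq_fmax // andbT lt0n; apply: contraNneq A0 => <-.
have B_adm : admissible_odd (fmax B) B.
  by move=> b bB; rewrite leq_fmax // andbT lt0n; apply: contraNneq B0 => <-.
have fmax_sum : fmax A + fmax B = 2 * m * (m + 1).
  have [_ max_le] := (incE _).1 (or_intror (or_intror (sad_value_add maxA maxB))).
  have [aK | [bK | [a [b [aA bB K_eq]]]]] := (incE (2 * m * (m + 1))).2 (ltac:(nia)).
  - by have := leq_fmax aK; lia.
  - by have := leq_fmax bK; lia.
  - by have := leq_fmax aA; have := leq_fmax bB; rewrite /ndist in K_eq; lia.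
have disj a : a \in A -> a \notin B.
  move=> aA; apply/negP => aB.
  by have [] := (incE _).1 (or_intror (or_intror (sad_value_dist aA aB))); rewrite /ndist subnn.
have sq : (2 * m + 1) ^ 2 = 2 * (2 * m * (m + 1)) + 1 by nia.
have sumsetE := (sumset_unfold_odd_iff A_adm B_adm fmax_sum disj).2 incE.
rewrite -sq in sumsetE.
have cardRA : #|` unfold_odd (fmax A) A| = 2 * m + 1 by rewrite card_unfold_odd ?cardA ?addn1.
have cardRB : #|` unfold_odd (fmax B) B| = 2 * m + 1 by rewrite card_unfold_odd ?cardB ?addn1.
have [RC_split | CR_split] := square_split_or_swap (ltac:(lia) : 1 < 2 * m + 1) cardRA cardRB
  sumsetE (symmetric_unfold_odd A_adm maxA) (symmetric_unfold_odd B_adm maxB).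
- exists (unfold_odd (fmax A) A), (unfold_odd (fmax B) B).
  by rewrite !fold_unfold_odd.
- exists (unfold_odd (fmax B) B), (unfold_odd (fmax A) A).
  by rewrite !fold_unfold_odd // fsetUC.
Qed.

Lemma injective_surjective_bij (A B : Type) (f : A -> B) :
  injective f -> (forall b, exists a, f a = b) -> bijective f.
Proof.
move=> f_inj f_surj.
pose g b := proj1_sig (constructive_indefinite_description _ (f_surj b)).
have gK b : f (g b) = b by rewrite /g; case: constructive_indefinite_description.
by exists g => // a; apply: f_inj; rewrite gK.
Qed.

Lemma exists_inv_bij (A B : Type) (f : A -> B) :
  bijective f -> exists g : B -> A, bijective g.
Proof. by case=> g fK gK; exists g, f. Qed.

Lemma fset2_eq (T : choiceType) (a b c d : T) :
  [fset a; b] = [fset c; d] -> (a = c /\ b = d) \/ (a = d /\ b = c).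
Proof.
move=> eq_ab_cd.
have : a \in [fset c; d] by rewrite -eq_ab_cd fset21.
have : b \in [fset c; d] by rewrite -eq_ab_cd fset22.
have : c \in [fset a; b] by rewrite eq_ab_cd fset21.
have : d \in [fset a; b] by rewrite eq_ab_cd fset22.
rewrite !in_fset2.
by do 4 case/orP => /eqP ?; subst; first [by left | by right].
Qed.

Definition split_pair (n : nat) :=
  {p : {fset nat} * {fset nat} | square_split n p.1 p.2}.

Lemma split_fold_bij n (P : {fset {fset nat}} -> Prop) (fold unfold : {fset nat} -> {fset nat}) :
  0 < n -> (forall X, symmetric_fset X -> #|` X| = n -> unfold (fold X) = X) ->
  (forall R C, square_split n R C -> P [fset fold R; fold C]) ->
  (forall S, P S -> exists R C, square_split n R C /\ [fset fold R; fold C] = S) ->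
  exists f : split_pair n -> {S | P S}, bijective f.
Proof.
move=> n_gt0 foldK fold_P P_fold.
exists (fun p : split_pair n => exist P _ (fold_P _ _ (proj2_sig p))).
apply: injective_surjective_bij => [|[S PS]]; last first.
  have [R [C [RC_split fold_RC]]] := P_fold S PS.
  by exists (exist _ (R, C) RC_split); apply: subset_eq_compat.
move=> [[R1 C1] split1] [[R2 C2] split2] /(congr1 (@proj1_sig _ _)) /= /fset2_eq fold_eq.
have [cardR1 cardC1 _ symR1 symC1 oneC1] := split1.
have [cardR2 cardC2 _ symR2 symC2 oneC2] := split2.
have fold_inj X Y : symmetric_fset X -> #|` X| = n -> symmetric_fset Y -> #|` Y| = n ->
    fold X = fold Y -> X = Y.
  by move=> symX cardX symY cardY eq_XY; rewrite -(foldK X) // -(foldK Y) // eq_XY.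
case: fold_eq => [[eqR eqC] | [eqRC eqCR]].
  by apply: subset_eq_compat; congr (_, _); apply: fold_inj.
(* Matching R1 with C2 would put 1 in both R2 and C2: then 1 + 0 = 0 + 1. *)
have one_R2 : 1 \in R2 by rewrite -(fold_inj C1 R2).
have [R2_0 C2_0] := split_mem0 n_gt0 split2.
by have := split_sum_inj split2 one_R2 R2_0 C2_0 oneC2 erefl.
Qed.

Lemma principal_split_bij n : 1 < n ->
  exists f : {M : 'M[int]_n | principal_reversible_square M} -> split_pair n, bijective f.
Proof.
move=> n_gt1.
exists (fun M => exist _ (row_set n_gt1 (proj1_sig M), col_set n_gt1 (proj1_sig M))
                   (principal_square_split n_gt1 (proj2_sig M))).
exists (fun p => exist _ (offset_mx n (proj1_sig p).1 (proj1_sig p).2)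
                   (offset_mx_principal n_gt1 (proj2_sig p))).
  by case=> M M_principal; apply: subset_eq_compat; apply: principal_offset_mx.
case=> [[R C] RC_split]; apply: subset_eq_compat.
by have /= [-> ->] := row_col_set_offset_mx n_gt1 RC_split.
Qed.

Lemma split_noninclusive_bij m : 0 < m ->
  exists f : split_pair (2 * m) -> {S : {fset {fset nat}} | noninclusive_SAD m S},
    bijective f.
Proof.
move=> m_gt0.
apply: (@split_fold_bij _ _ fold_even (fun A => unfold_even (fmax A) A)).
- by lia.
- move=> X symX cardX.
  have X_even : ~~ odd #|` X| by rewrite cardX; lia.
  have X_gt0 : 0 < #|` X| by rewrite cardX; lia.
  by rewrite fmax_fold_even // unfold_fold_even.
- by move=> R C; apply: split_noninclusive_SAD.
- by move=> S; apply: noninclusive_SAD_split.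
Qed.

Lemma split_inclusive_bij m : 0 < m ->
  exists f : split_pair (2 * m + 1) -> {S : {fset {fset nat}} | inclusive_SAD m S},
    bijective f.
Proof.
move=> m_gt0.
apply: (@split_fold_bij _ _ fold_odd (fun A => unfold_odd (fmax A) A)).
- by lia.
- move=> X symX cardX.
  have X_odd : odd #|` X| by rewrite cardX addn1 /= oddM.
  have X_gt1 : 1 < #|` X| by rewrite cardX; lia.
  by rewrite fmax_fold_odd // unfold_fold_odd.
- by move=> R C; apply: split_inclusive_SAD.
- by move=> S; apply: inclusive_SAD_split.
Qed.

Theorem theorem5 (m : nat) (hm : (1 <= m)%N) :
  (exists f : {S : {fset {fset nat}} | noninclusive_SAD m S} ->
              {M : 'M[int]_(2 * m) | principal_reversible_square M},
      bijective f) /\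
  (exists g : {S : {fset {fset nat}} | inclusive_SAD m S} ->
              {M : 'M[int]_(2 * m + 1) | principal_reversible_square M},
      bijective g).
Proof.
split.
  have [square_split_f square_split_bij] := principal_split_bij (ltac:(lia) : 1 < 2 * m).
  have [split_sad_f split_sad_bij] := split_noninclusive_bij hm.
  exact: exists_inv_bij (bij_comp split_sad_bij square_split_bij).
have [square_split_f square_split_bij] := principal_split_bij (ltac:(lia) : 1 < 2 * m + 1).
have [split_sad_f split_sad_bij] := split_inclusive_bij hm.
exact: exists_inv_bij (bij_comp split_sad_bij square_split_bij).
Qed.
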